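(* Let $P(\lambda)=\sum_{j=0}^m A_j\lambda^j$ be an $n\times n$ complex matrix polynomial, $\mu_1\neq\mu_2$ complex numbers, $\varepsilon>0$ and $w=\{\omega_0,\dots,\omega_m\}$ nonnegative weights with $\omega_0>0$. Suppose $Q(\lambda)=P(\lambda)+\Delta(\lambda)\in\mathcal{B}(P,\varepsilon,w)$, where $\Delta(\lambda)=\sum_{j=0}^m\Delta_j\lambda^j$, and that $\mu_1,\mu_2$ are eigenvalues of $Q$. Then for every $\gamma\neq0$, $$\varepsilon\ \ge\ \frac{\|F[\Delta(\mu_1,\mu_2);\gamma]\|}{\left\|\begin{bmatrix} w(|\mu_1|) & 0\\ \gamma\,|w[\mu_1,\mu_2]| & w(|\mu_2|)\end{bmatrix}\right\|}\ \ge\ \frac{s_{2n-1}(F[P(\mu_1,\mu_2);\gamma])}{\left\|\begin{bmatrix} w(|\mu_1|) & 0\\ \gamma\,|w[\mu_1,\mu_2]| & w(|\mu_2|)\end{bmatrix}\right\|}.$$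
   Context: $\mathcal{B}(P,\varepsilon,w)$ is the set of matrix polynomials $\sum_{j=0}^m(A_j+\Delta_j)\lambda^j$ with $\Delta_j\in\mathbb{C}^{n\times n}$ and $\|\Delta_j\|\le\varepsilon\omega_j$ for $j=0,\dots,m$ ($\|\cdot\|$ the spectral norm). $w(\lambda)=\sum_{j=0}^m\omega_j\lambda^j$, and $|w[\mu_1,\mu_2]|$ denotes $\sum_{j=0}^m\omega_j\frac{|\mu_1^j-\mu_2^j|}{|\mu_1-\mu_2|}$. For a matrix polynomial $R$, $R[\mu_1,\mu_2]=\frac{R(\mu_1)-R(\mu_2)}{\mu_1-\mu_2}$ and $F[R(\mu_1,\mu_2);\gamma]=\begin{bmatrix} R(\mu_1) & 0\\ \gamma R[\mu_1,\mu_2] & R(\mu_2)\end{bmatrix}$. Singular values are ordered $s_1\ge\dots\ge s_{2n}$, so $s_{2n-1}$ is the second smallest. *)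

From HB Require Import structures.
From mathcomp Require Import all_boot all_order all_algebra.
From mathcomp Require Import complex.
From mathcomp Require Import boolp classical_sets reals.
From Stdlib Require Import ClassicalEpsilon.
Set Implicit Arguments. Unset Strict Implicit. Unset Printing Implicit Defensive.
Import Order.TTheory GRing.Theory Num.Theory.
Local Open Scope ring_scope.
Local Open Scope complex_scope.

Section Defs.
Variable R : realType.
Local Notation C := R[i].

Definition cabs (z : C) : R := Normc.normc z.

Definition vnorm (k : nat) (v : 'cV[C]_k) : R :=
  Num.sqrt (\sum_(i < k) cabs (v i 0) ^+ 2).

Definition specnorm (p q : nat) (A : 'M[C]_(p, q)) : R :=
  sup [set vnorm (A *m v) | v in [set v : 'cV[C]_q | vnorm v = 1]]%classic.

Definition ctrmx (p q : nat) (A : 'M[C]_(p, q)) : 'M[C]_(q, p) :=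
  (map_mx (@conjc R) A)^T.

Definition unitary (k : nat) (U : 'M[C]_k) : Prop := ctrmx U *m U = 1%:M.

Definition svd_values (N : nat) (A : 'M[C]_N) (s : 'I_N -> R) : Prop :=
  (forall i, 0 <= s i) /\ (forall i j : 'I_N, (i <= j)%N -> s j <= s i) /\
  exists U V : 'M[C]_N, unitary U /\ unitary V /\
    A = U *m diag_mx (\row_i (s i)%:C) *m ctrmx V.

Definition singular_values (N : nat) (A : 'M[C]_N) : 'I_N -> R :=
  epsilon (inhabits (fun _ => 0)) (svd_values A).

(* s_k(A), 1-based: s_1 >= s_2 >= ... >= s_N *)
Definition singval (N : nat) (A : 'M[C]_N) (k : nat) : R :=
  nth 0 [seq singular_values A i | i <- enum 'I_N] k.-1.

Definition mpeval (n m : nat) (A : 'I_m.+1 -> 'M[C]_n) (z : C) : 'M[C]_n :=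
  \sum_(j < m.+1) z ^+ j *: A j.

Definition mpdd (n m : nat) (A : 'I_m.+1 -> 'M[C]_n) (z1 z2 : C) : 'M[C]_n :=
  (z1 - z2)^-1 *: (mpeval A z1 - mpeval A z2).

Definition Fmx (n m : nat) (A : 'I_m.+1 -> 'M[C]_n) (z1 z2 : C) (g : R)
  : 'M[C]_(n + n) :=
  block_mx (mpeval A z1) 0 (g%:C *: mpdd A z1 z2) (mpeval A z2).

Definition mp_eigenvalue (n m : nat) (A : 'I_m.+1 -> 'M[C]_n) (z : C) : Prop :=
  \det (mpeval A z) = 0.

Definition weval (m : nat) (w : 'I_m.+1 -> R) (x : R) : R :=
  \sum_(j < m.+1) w j * x ^+ j.

Definition wdd_abs (m : nat) (w : 'I_m.+1 -> R) (z1 z2 : C) : R :=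
  \sum_(j < m.+1) w j * (cabs (z1 ^+ j - z2 ^+ j) / cabs (z1 - z2)).

Definition Wmx (m : nat) (w : 'I_m.+1 -> R) (z1 z2 : C) (g : R) : 'M[C]_2 :=
  \matrix_(i < 2, j < 2)
    (if (i == 0) && (j == 0) then (weval w (cabs z1))%:C
     else if (i == 1) && (j == 0) then (g * wdd_abs w z1 z2)%:C
     else if (i == 1) && (j == 1) then (weval w (cabs z2))%:C
     else 0).

End Defs.

(* For a unit vector x = (x1; x2), the two blocks of F[Delta] x are bounded by
   eps w(|mu1|) |x1| and eps (|gamma| |w[mu1,mu2]| |x1| + w(|mu2|) |x2|), which are
   the entries of eps W y for the unit vector y = (|x1|; sign(gamma) |x2|); hence
   ||F[Delta]|| <= eps ||W||.
   If Q(mu1) x = 0 and Q(mu2) v = 0, then (0; v) and (x; gamma/(mu1 - mu2) x) are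
   independent kernel vectors of F[Q] = F[P] + F[Delta], so some nonzero z in their
   span is orthogonal to the last right singular vector of F[P]; for it,
   s_{2n-1} |z| <= |F[P] z| = |F[Delta] z| <= ||F[Delta]|| |z|.  Singular values
   exist by the spectral theorem for F[P]^* F[P]. *)

From HB Require Import structures.
From mathcomp Require Import all_boot all_order all_algebra.
From mathcomp Require Import complex reals boolp classical_sets.
From Stdlib Require Import ClassicalEpsilon.
From mathcomp Require Import ring zify.
Set Implicit Arguments. Unset Strict Implicit. Unset Printing Implicit Defensive.
Import Order.TTheory GRing.Theory Num.Theory Num.Def.
Local Open Scope ring_scope.
Local Open Scope complex_scope.
Local Open Scope sesquilinear_scope.

Section VectorNorm.
Variable R : realType.
Local Notation C := R[i].

Definition vnorm2 k (v : 'cV[C]_k) : R := \sum_(i < k) cabs (v i 0) ^+ 2.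

Lemma cabsE (z : C) : (cabs z)%:C = `|z|.
Proof. by []. Qed.

Lemma cabs_ge0 (z : C) : 0 <= cabs z.
Proof. by rewrite -lecR cabsE normr_ge0. Qed.

Lemma cabs0 : cabs (0 : C) = 0.
Proof. by apply: (@complexI R); rewrite cabsE normr0. Qed.

Lemma cabsR (x : R) : cabs x%:C = `|x|.
Proof. by apply: complexI; rewrite cabsE normc_def /= expr0n /= addr0 sqrtr_sqr. Qed.

Lemma cabsM (x y : C) : cabs (x * y) = cabs x * cabs y.
Proof. by apply: complexI; rewrite rmorphM /= !cabsE normrM. Qed.

Lemma cabsX (z : C) j : cabs (z ^+ j) = cabs z ^+ j.
Proof. by apply: (@complexI R); rewrite rmorphXn /= !cabsE normrX. Qed.

Lemma cabsV (z : C) : cabs z^-1 = (cabs z)^-1.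
Proof. by apply: (@complexI R); rewrite fmorphV /= !cabsE normfV. Qed.

Lemma vnorm2_ge0 k (v : 'cV[C]_k) : 0 <= vnorm2 v.
Proof. by apply: sumr_ge0 => i _; rewrite exprn_ge0 ?cabs_ge0. Qed.

Lemma vnormE k (v : 'cV[C]_k) : vnorm v = Num.sqrt (vnorm2 v).
Proof. by []. Qed.

Lemma vnorm_ge0 k (v : 'cV[C]_k) : 0 <= vnorm v.
Proof. exact: sqrtr_ge0. Qed.

Lemma sqr_vnorm k (v : 'cV[C]_k) : vnorm v ^+ 2 = vnorm2 v.
Proof. by rewrite vnormE sqr_sqrtr ?vnorm2_ge0. Qed.

Lemma ctrmxE p q (A : 'M[C]_(p, q)) : ctrmx A = A ^t conjC.
Proof. by rewrite /ctrmx map_trmx. Qed.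

Lemma ctrmxM p q r (A : 'M[C]_(p, q)) (B : 'M[C]_(q, r)) :
  ctrmx (A *m B) = ctrmx B *m ctrmx A.
Proof. by rewrite /ctrmx map_mxM trmx_mul. Qed.

Lemma ctrmxK p q (A : 'M[C]_(p, q)) : ctrmx (ctrmx A) = A.
Proof. by apply/matrixP => i j; rewrite !mxE conjcK. Qed.

Lemma vnorm2_col p q (M : 'M[C]_(p, q)) i :
  (vnorm2 (col i M))%:C = (ctrmx M *m M) i i.
Proof.
rewrite /vnorm2 rmorph_sum !mxE; apply: eq_bigr => l _.
by rewrite rmorphXn /= cabsE normCK !mxE mulrC.
Qed.

Lemma vnorm2_ctrmx k (v : 'cV[C]_k) : (vnorm2 v)%:C = (ctrmx v *m v) 0 0.
Proof. by rewrite -vnorm2_col col_id. Qed.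

Lemma vnormC k (v : 'cV[C]_k) : (vnorm v)%:C = sqrtC (dotmx v^T v^T).
Proof.
have -> : dotmx v^T v^T = (vnorm2 v)%:C.
  by rewrite vnorm2_ctrmx dotmxE !mxE; apply: eq_bigr => i _; rewrite !mxE mulrC.
by rewrite -[in RHS](sqr_vnorm v) rmorphXn /= sqrCK // ler0c vnorm_ge0.
Qed.

Lemma vnormD k (u v : 'cV[C]_k) : vnorm (u + v) <= vnorm u + vnorm v.
Proof.
rewrite -lecR rmorphD /= !vnormC linearD /=.
exact: (triangle_lerif (@dotmx C k) u^T v^T).1.
Qed.

Lemma vnormZ k (c : C) (v : 'cV[C]_k) : vnorm (c *: v) = cabs c * vnorm v.
Proof.
rewrite !vnormE; have -> : vnorm2 (c *: v) = cabs c ^+ 2 * vnorm2 v.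
  by rewrite /vnorm2 mulr_sumr; apply: eq_bigr => i _; rewrite !mxE cabsM exprMn.
by rewrite sqrtrM ?exprn_ge0 ?cabs_ge0 // sqrtr_sqr ger0_norm ?cabs_ge0.
Qed.

Lemma vnormN k (v : 'cV[C]_k) : vnorm (- v) = vnorm v.
Proof. by rewrite -scaleN1r vnormZ -(@rmorphN1 _ _ (real_complex R)) cabsR normrN1 mul1r. Qed.

Lemma vnorm0 k : vnorm (0 : 'cV[C]_k) = 0.
Proof. by rewrite -(scale0r 0) vnormZ cabs0 mul0r. Qed.

Lemma vnorm2_eq0 k (v : 'cV[C]_k) : vnorm2 v = 0 -> v = 0.
Proof.
move=> v0; apply/matrixP => i j; rewrite ord1 mxE.
have /eqP : cabs (v i 0) ^+ 2 = 0.
  apply/eqP; rewrite eq_le exprn_ge0 ?cabs_ge0 // andbT -v0 /vnorm2.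
  by rewrite (bigD1 i) //= lerDl sumr_ge0 // => ? _; rewrite exprn_ge0 ?cabs_ge0.
by rewrite expf_eq0 /= => /eqP c0; apply/eqP; rewrite -normr_eq0 -cabsE c0.
Qed.

Lemma vnorm_gt0 k (v : 'cV[C]_k) : v != 0 -> 0 < vnorm v.
Proof.
move=> v0; rewrite lt_def vnorm_ge0 andbT; apply: contra v0 => /eqP v0.
by apply/eqP/vnorm2_eq0; rewrite -sqr_vnorm v0 expr0n.
Qed.

Lemma vnorm_sum k (I : finType) (f : I -> 'cV[C]_k) :
  vnorm (\sum_i f i) <= \sum_i vnorm (f i).
Proof.
elim/big_ind2: _ => [|x1 x2 y1 y2 h1 h2|//]; first by rewrite vnorm0.
exact: le_trans (vnormD _ _) (lerD h1 h2).
Qed.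

Lemma vnorm2_col_mx k l (a : 'cV[C]_k) (b : 'cV[C]_l) :
  vnorm2 (col_mx a b) = vnorm2 a + vnorm2 b.
Proof.
rewrite /vnorm2 big_split_ord /=.
by congr (_ + _); apply: eq_bigr => i _; rewrite (col_mxEu, col_mxEd).
Qed.

Lemma vnorm_unitary k l (U : 'M[C]_(k, l)) (v : 'cV[C]_l) :
  ctrmx U *m U = 1%:M -> vnorm (U *m v) = vnorm v.
Proof.
move=> U1; rewrite !vnormE; congr Num.sqrt; apply: complexI.
by rewrite !vnorm2_ctrmx ctrmxM mulmxA -(mulmxA (ctrmx v)) U1 mulmx1.
Qed.

Lemma cabs_le_vnorm k (v : 'cV[C]_k) i : cabs (v i 0) <= vnorm v.
Proof.
rewrite vnormE -(ger0_norm (cabs_ge0 (v i 0))) -sqrtr_sqr.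
rewrite ler_sqrt ?vnorm2_ge0 // /vnorm2 (bigD1 i) //= lerDl sumr_ge0 // => ? _.
by rewrite exprn_ge0 ?cabs_ge0.
Qed.

Lemma mulmx_col_sum p q (M : 'M[C]_(p, q)) (v : 'cV[C]_q) :
  M *m v = \sum_j v j 0 *: col j M.
Proof.
apply/matrixP => i k; rewrite ord1 !mxE summxE; apply: eq_bigr => j _.
by rewrite !mxE mulrC.
Qed.

Lemma vnorm_normalize k (v : 'cV[C]_k) : v != 0 ->
  vnorm ((vnorm v)^-1%:C *: v) = 1.
Proof.
move=> v0; rewrite vnormZ cabsR ger0_norm ?invr_ge0 ?vnorm_ge0 // mulVf //.
by rewrite gt_eqF ?vnorm_gt0.
Qed.

End VectorNorm.

Section SpectralNorm.
Variable R : realType.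
Local Notation C := R[i].

Lemma vnorm_mulmx_bounded p q (M : 'M[C]_(p, q)) :
  exists K, forall v, vnorm (M *m v) <= K * vnorm v.
Proof.
exists (\sum_j vnorm (col j M)) => v.
rewrite mulmx_col_sum mulr_suml; apply: le_trans (vnorm_sum _) _.
apply: ler_sum => j _; rewrite vnormZ mulrC.
by apply: ler_wpM2l; [exact: vnorm_ge0 | exact: cabs_le_vnorm].
Qed.

Lemma specnorm_ub p q (M : 'M[C]_(p, q)) v :
  vnorm v = 1 -> vnorm (M *m v) <= specnorm M.
Proof.
move=> v1; apply: sup_upper_bound; last by exists v.
split; first by exists (vnorm (M *m v)); exists v.
have [K MK] := vnorm_mulmx_bounded M; exists K => _ [u /= u1 <-].
by have := MK u; rewrite u1 mulr1.
Qed.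

(* Without unit vectors (only for q = 0) the supremum is taken over the empty set. *)
Lemma specnorm_no_unit p q (M : 'M[C]_(p, q)) :
  ~ (exists v : 'cV[C]_q, vnorm v = 1) -> specnorm M = 0.
Proof.
move=> nov; rewrite /specnorm.
suff -> : [set vnorm (M *m v) | v in [set v | vnorm v = 1]]%classic = set0.
  exact: sup0.
by apply/seteqP; split => // t [v v1 _]; case: nov; exists v.
Qed.

Lemma specnorm_ge0 p q (M : 'M[C]_(p, q)) : 0 <= specnorm M.
Proof.
have [[v v1]|nov] := pselect (exists v : 'cV[C]_q, vnorm v = 1).
  exact: le_trans (vnorm_ge0 _) (specnorm_ub M v1).
by rewrite specnorm_no_unit.
Qed.

Lemma specnorm_le p q (M : 'M[C]_(p, q)) c :
  0 <= c -> (forall v, vnorm v = 1 -> vnorm (M *m v) <= c) -> specnorm M <= c.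
Proof.
move=> c0 Mc.
have [[v v1]|nov] := pselect (exists v : 'cV[C]_q, vnorm v = 1).
  apply: ge_sup; first by exists (vnorm (M *m v)); exists v.
  by move=> _ [u u1 <-]; exact: Mc.
by rewrite specnorm_no_unit.
Qed.

Lemma vnorm_mulmx_le p q (M : 'M[C]_(p, q)) v :
  vnorm (M *m v) <= specnorm M * vnorm v.
Proof.
have [->|v0] := eqVneq v 0; first by rewrite mulmx0 !vnorm0 mulr0.
have := specnorm_ub M (vnorm_normalize v0).
rewrite -scalemxAr vnormZ cabsR ger0_norm ?invr_ge0 ?vnorm_ge0 //.
by rewrite ler_pdivrMl ?vnorm_gt0 // mulrC.
Qed.

End SpectralNorm.

Section WeightedBounds.
Variable R : realType.
Local Notation C := R[i].

Lemma vnorm_weighted_sum_le n m (c : 'I_m.+1 -> C) (D : 'I_m.+1 -> 'M[C]_n)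
    (w : 'I_m.+1 -> R) (eps : R) (x : 'cV[C]_n) :
  (forall j, specnorm (D j) <= eps * w j) ->
  vnorm ((\sum_j c j *: D j) *m x) <= eps * (\sum_j w j * cabs (c j)) * vnorm x.
Proof.
move=> Dw; rewrite mulmx_suml; apply: le_trans (vnorm_sum _) _.
rewrite mulr_sumr mulr_suml; apply: ler_sum => j _.
rewrite -scalemxAl vnormZ [X in _ <= X](_ : _ = cabs (c j) * (eps * w j * vnorm x)).
  apply: ler_wpM2l; first exact: cabs_ge0.
  apply: le_trans (vnorm_mulmx_le _ _) _.
  by apply: ler_wpM2r; [exact: vnorm_ge0 | exact: Dw].
by ring.
Qed.

Lemma vnorm_mpeval_le n m (D : 'I_m.+1 -> 'M[C]_n) (w : 'I_m.+1 -> R) (eps : R)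
    (z : C) (x : 'cV[C]_n) :
  (forall j, specnorm (D j) <= eps * w j) ->
  vnorm (mpeval D z *m x) <= eps * weval w (cabs z) * vnorm x.
Proof.
move=> Dw; rewrite /weval; under eq_bigr do rewrite -cabsX.
exact: vnorm_weighted_sum_le.
Qed.

Lemma mpddE n m (D : 'I_m.+1 -> 'M[C]_n) (z1 z2 : C) :
  mpdd D z1 z2 = \sum_(j < m.+1) ((z1 ^+ j - z2 ^+ j) / (z1 - z2)) *: D j.
Proof.
rewrite /mpdd /mpeval -sumrB scaler_sumr; apply: eq_bigr => j _ /=.
by rewrite -scalerBl scalerA mulrC.
Qed.

Lemma vnorm_mpdd_le n m (D : 'I_m.+1 -> 'M[C]_n) (w : 'I_m.+1 -> R) (eps : R)
    (z1 z2 : C) (x : 'cV[C]_n) :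
  (forall j, specnorm (D j) <= eps * w j) ->
  vnorm (mpdd D z1 z2 *m x) <= eps * wdd_abs w z1 z2 * vnorm x.
Proof.
move=> Dw; rewrite mpddE /wdd_abs; under [in X in _ <= X]eq_bigr do rewrite -cabsV -cabsM.
exact: vnorm_weighted_sum_le.
Qed.

Lemma weval_ge0 m (w : 'I_m.+1 -> R) x :
  (forall j, 0 <= w j) -> 0 <= x -> 0 <= weval w x.
Proof. by move=> w0 x0; apply: sumr_ge0 => j _; rewrite mulr_ge0 ?exprn_ge0. Qed.

Lemma wdd_abs_ge0 m (w : 'I_m.+1 -> R) z1 z2 :
  (forall j, 0 <= w j) -> 0 <= wdd_abs w z1 z2.
Proof. by move=> w0; apply: sumr_ge0 => j _; rewrite mulr_ge0 ?divr_ge0 ?cabs_ge0. Qed.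

Lemma Fmx_mulmx n m (D : 'I_m.+1 -> 'M[C]_n) z1 z2 g (x : 'cV[C]_(n + n)) :
  Fmx D z1 z2 g *m x = col_mx (mpeval D z1 *m usubmx x)
    (g%:C *: (mpdd D z1 z2 *m usubmx x) + mpeval D z2 *m dsubmx x).
Proof.
by rewrite -{1}[x](vsubmxK x) /Fmx mul_block_col mul0mx addr0 -scalemxAl.
Qed.

Lemma Fmx_add n m (A D : 'I_m.+1 -> 'M[C]_n) z1 z2 g :
  Fmx (fun j => A j + D j) z1 z2 g = Fmx A z1 z2 g + Fmx D z1 z2 g.
Proof.
have mpevalD z : mpeval (fun j => A j + D j) z = mpeval A z + mpeval D z.
  by rewrite /mpeval -big_split; apply: eq_bigr => j _; rewrite scalerDr.
rewrite /Fmx add_block_mx addr0 /mpdd !mpevalD; congr block_mx.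
by rewrite -!scalerDr opprD addrACA.
Qed.

Definition cvec2 (a b : R) : 'cV[C]_2 :=
  \col_(i < 2) (if i == 0 then a%:C else b%:C).

Lemma vnorm2_cvec2 a b : vnorm2 (cvec2 a b) = a ^+ 2 + b ^+ 2.
Proof.
rewrite /vnorm2 !big_ord_recl big_ord0 addr0 !mxE /=.
by rewrite expr0n /= !addr0 !sqr_sqrtr ?sqr_ge0.
Qed.

Lemma Wmx_cvec2 m (w : 'I_m.+1 -> R) z1 z2 g a b :
  Wmx w z1 z2 g *m cvec2 a b =
  cvec2 (weval w (cabs z1) * a) (g * wdd_abs w z1 z2 * a + weval w (cabs z2) * b).
Proof.
apply/matrixP => i k; rewrite ord1 !mxE !big_ord_recl big_ord0 !mxE.
case: i => [[|[|//]] i2] /=; rewrite !(mul0r, mulr0, addr0, add0r) -!rmorphM //.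
by rewrite -rmorphD.
Qed.

(* The test vector (a; sign(g) b) makes the two contributions of the second row add up. *)
Lemma specnorm_Wmx_ge m (w : 'I_m.+1 -> R) z1 z2 g a b :
  (forall j, 0 <= w j) -> a ^+ 2 + b ^+ 2 = 1 ->
  (weval w (cabs z1) * a) ^+ 2 + (`|g| * wdd_abs w z1 z2 * a + weval w (cabs z2) * b) ^+ 2
    <= specnorm (Wmx w z1 z2 g) ^+ 2.
Proof.
move=> w0 ab1; pose sg : R := (-1) ^+ (g < 0)%R.
have sg2 : sg ^+ 2 = 1 by rewrite /sg sqrr_sign.
have gE : g = sg * `|g| by rewrite mulr_sign_norm.
have y1 : vnorm (cvec2 a (sg * b)) = 1.
  by rewrite vnormE vnorm2_cvec2 exprMn sg2 mul1r ab1 sqrtr1.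
have := specnorm_ub (Wmx w z1 z2 g) y1.
rewrite -(ler_pXn2r (_ : 0 < 2)%N) ?nnegrE ?vnorm_ge0 ?specnorm_ge0 //.
apply: le_trans; rewrite sqr_vnorm Wmx_cvec2 vnorm2_cvec2 lerD2l.
rewrite [X in _ <= X ^+ 2]
  (_ : _ = sg * (`|g| * wdd_abs w z1 z2 * a + weval w (cabs z2) * b)).
  by rewrite exprMn sg2 mul1r.
by rewrite {1}gE; ring.
Qed.

Lemma specnorm_Fmx_le n m (D : 'I_m.+1 -> 'M[C]_n) (w : 'I_m.+1 -> R) (eps : R)
    z1 z2 (g : R) :
  0 <= eps -> (forall j, 0 <= w j) -> (forall j, specnorm (D j) <= eps * w j) ->
  specnorm (Fmx D z1 z2 g) <= eps * specnorm (Wmx w z1 z2 g).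
Proof.
move=> eps0 w0 Dw; have epsW0 := mulr_ge0 eps0 (specnorm_ge0 (Wmx w z1 z2 g)).
apply: specnorm_le => // x x1; rewrite Fmx_mulmx.
set a := vnorm (usubmx x); set b := vnorm (dsubmx x).
have ab1 : a ^+ 2 + b ^+ 2 = 1.
  by rewrite !sqr_vnorm -vnorm2_col_mx vsubmxK -sqr_vnorm x1 expr1n.
have top := vnorm_mpeval_le z1 (usubmx x) Dw.
have bot : vnorm (g%:C *: (mpdd D z1 z2 *m usubmx x) + mpeval D z2 *m dsubmx x)
    <= eps * (`|g| * wdd_abs w z1 z2 * a + weval w (cabs z2) * b).
  apply: le_trans (vnormD _ _) _; rewrite mulrDr.
  apply: lerD; last by rewrite mulrA; exact: vnorm_mpeval_le.
  rewrite vnormZ cabsR (_ : _ * (_ * _ * a) = `|g| * (eps * wdd_abs w z1 z2 * a)).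
    by apply: ler_wpM2l; [exact: normr_ge0 | exact: vnorm_mpdd_le].
  by ring.
rewrite -(ler_pXn2r (_ : 0 < 2)%N) ?nnegrE ?vnorm_ge0 // sqr_vnorm vnorm2_col_mx.
rewrite -!sqr_vnorm exprMn.
apply: le_trans (ler_wpM2l (sqr_ge0 eps) (specnorm_Wmx_ge z1 z2 g w0 ab1)).
rewrite mulrDr -!exprMn mulrA.
by apply: lerD; apply: lerXn2r => //; rewrite nnegrE ?vnorm_ge0 //;
  [exact: le_trans (vnorm_ge0 _) top | exact: le_trans (vnorm_ge0 _) bot].
Qed.

End WeightedBounds.

Section SecondSmallestSingularValue.
Variable R : realType.
Local Notation C := R[i].

Lemma unitary_ctrmx N (V : 'M[C]_N) : unitary V -> unitary (ctrmx V).
Proof. by rewrite /unitary ctrmxK => /mulmx1C. Qed.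

Lemma svd_vnorm_ge N (M : 'M[C]_N) (s : 'I_N -> R) U V (i0 i1 : 'I_N)
    (z : 'cV[C]_N) :
  (forall i, 0 <= s i) -> (forall i j : 'I_N, (i <= j)%N -> s j <= s i) ->
  unitary U -> unitary V -> M = U *m diag_mx (\row_i (s i)%:C) *m ctrmx V ->
  (forall i : 'I_N, i != i1 -> (i <= i0)%N) -> row i1 (ctrmx V) *m z = 0 ->
  s i0 * vnorm z <= vnorm (M *m z).
Proof.
move=> s0 s_noninc U1 V1 -> i0_max Vz.
have yi1 : (ctrmx V *m z) i1 0 = 0.
  by have := congr1 (fun r : 'M[C]_1 => r 0 0) Vz; rewrite /= -row_mul !mxE.
rewrite -!mulmxA vnorm_unitary //.
rewrite -[in X in _ * X <= _](vnorm_unitary z (unitary_ctrmx V1)).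
move: (ctrmx V *m z) yi1 => y yi1.
rewrite !vnormE -[s i0](ger0_norm (s0 i0)) -sqrtr_sqr -sqrtrM ?sqr_ge0 //.
rewrite ler_sqrt ?vnorm2_ge0 // /vnorm2 mulr_sumr; apply: ler_sum => i _.
rewrite mul_diag_mx !mxE cabsM cabsR ger0_norm // exprMn.
have [->|ne] := eqVneq i i1; first by rewrite yi1 cabs0 expr0n /= !mulr0.
apply: ler_wpM2r; first exact: exprn_ge0 (cabs_ge0 _).
by apply: lerXn2r; rewrite ?nnegrE //; apply: s_noninc; exact: i0_max.
Qed.

Lemma svd_second_smallest_le_specnorm N (M E : 'M[C]_N) (s : 'I_N -> R) U V
    (i0 i1 : 'I_N) :
  (forall i, 0 <= s i) -> (forall i j : 'I_N, (i <= j)%N -> s j <= s i) ->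
  unitary U -> unitary V -> M = U *m diag_mx (\row_i (s i)%:C) *m ctrmx V ->
  (forall i : 'I_N, i != i1 -> (i <= i0)%N) ->
  (forall r : 'rV[C]_N, exists2 z : 'cV[C]_N, z != 0 & (M + E) *m z = 0 /\ r *m z = 0) ->
  s i0 <= specnorm E.
Proof.
move=> s0 s_noninc U1 V1 Msvd i0_max ker2.
have [z z0 [MEz Vz]] := ker2 (row i1 (ctrmx V)).
have Mz : M *m z = - (E *m z) by apply/eqP; rewrite -addr_eq0 -mulmxDl MEz.
have := svd_vnorm_ge s0 s_noninc U1 V1 Msvd i0_max Vz.
rewrite Mz vnormN => /le_trans /(_ (vnorm_mulmx_le _ _)).
by rewrite ler_pM2r ?vnorm_gt0.
Qed.

Lemma det0_ker n (M : 'M[C]_n) : \det M = 0 -> exists2 v : 'cV[C]_n, v != 0 & M *m v = 0.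
Proof.
move=> M0; have /det0P [u u0 uM] : \det M^T == 0 by rewrite det_tr M0.
exists u^T; first by rewrite trmx_eq0.
by rewrite -[M]trmxK -trmx_mul uM trmx0.
Qed.

(* With Q(z1) x = Q(z2) v = 0, the vectors (0; v) and (x; g/(z1 - z2) x) span a
   two-dimensional kernel of F[Q]. *)
Lemma Fmx_ker_orth n m (Q : 'I_m.+1 -> 'M[C]_n) z1 z2 g (r : 'rV[C]_(n + n)) :
  mp_eigenvalue Q z1 -> mp_eigenvalue Q z2 ->
  exists2 z : 'cV[C]_(n + n), z != 0 & Fmx Q z1 z2 g *m z = 0 /\ r *m z = 0.
Proof.
move=> Q1 Q2.
have [x x0 Qx] := det0_ker Q1; have [v v0 Qv] := det0_ker Q2.
pose k1 : 'cV[C]_(n + n) := col_mx 0 v.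
pose k2 : 'cV[C]_(n + n) := col_mx x ((g%:C / (z1 - z2)) *: x).
have Fk1 : Fmx Q z1 z2 g *m k1 = 0.
  by rewrite Fmx_mulmx col_mxKu col_mxKd !mulmx0 scaler0 add0r Qv col_mx0.
have Fk2 : Fmx Q z1 z2 g *m k2 = 0.
  rewrite Fmx_mulmx col_mxKu col_mxKd Qx /mpdd -scalemxAl mulmxBl Qx sub0r.
  by rewrite -scalemxAr !scalerN scalerA addNr col_mx0.
pose phi (k : 'cV[C]_(n + n)) := (r *m k) 0 0.
have r_eq0 k : phi k = 0 -> r *m k = 0.
  by move=> rk; apply/matrixP => i j; rewrite !ord1 [RHS]mxE; exact: rk.
have [rk1|rk1] := eqVneq (phi k1) 0.
  exists k1; last by split; [exact: Fk1 | exact: r_eq0].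
  by apply: contra v0 => /eqP/(congr1 dsubmx); rewrite col_mxKd linear0 => ->.
exists (phi k2 *: k1 - phi k1 *: k2).
  apply: contra x0 => /eqP/(congr1 usubmx).
  rewrite linearB /= !linearZ /= !col_mxKu scaler0 add0r linear0 scalerN => /eqP.
  by rewrite oppr_eq0 scaler_eq0 (negPf rk1).
split; first by rewrite mulmxBr -!scalemxAr Fk1 Fk2 !scaler0 subr0.
by apply: r_eq0; rewrite /phi mulmxBr -!scalemxAr !mxE mulrC subrr.
Qed.

End SecondSmallestSingularValue.

Section SingularValueDecomposition.
Variable R : realType.
Local Notation C := R[i].

Lemma exists_sorting_inj N (f : 'I_N -> R) : exists sigma : 'I_N -> 'I_N,
  injective sigma /\ forall i j : 'I_N, (i <= j)%N -> f (sigma j) <= f (sigma i).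
Proof.
pose leT a b := f b <= f a.
pose r := sort leT (enum 'I_N).
have size_r : size r = N by rewrite size_sort size_enum_ord.
have leT_total : total leT by move=> a b; rewrite /leT le_total.
have leT_trans : transitive leT by move=> a b c h1 h2; rewrite /leT (le_trans h2 h1).
exists (fun i => nth i r i); split.
  move=> i j /eqP; rewrite (set_nth_default i j) ?size_r ?ltn_ord //.
  by rewrite nth_uniq ?size_r ?ltn_ord ?sort_uniq ?enum_uniq // => /eqP/val_inj.
move=> i j ij; rewrite (set_nth_default i j) ?size_r ?ltn_ord //.
apply: (sorted_leq_nth leT_trans) => //; rewrite ?inE ?size_r ?ltn_ord //.
  by move=> a; rewrite /leT lexx.
exact: sort_sorted.
Qed.

Lemma unitarymx_unitary N (Y : 'M[C]_N) : Y \is unitarymx -> unitary (ctrmx Y).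
Proof. by rewrite /unitary ctrmxK ctrmxE => /unitarymxP. Qed.

Local Notation "B ^!" :=
  (orthomx conjC (mx_of_hermitian (hermitian1mx _)) B) : matrix_set_scope.

Lemma castmx_unitarymx m N (e : m = N) (Z : 'M[C]_(m, N)) :
  Z \is unitarymx -> castmx (e, erefl N) Z \is unitarymx.
Proof. by case: N / e in Z *; rewrite castmx_id. Qed.

Lemma row_castmx m N (e : m = N) (Z : 'M[C]_(m, N)) (j : 'I_N) :
  row j (castmx (e, erefl N) Z) = row (cast_ord (esym e) j) Z.
Proof. by case: N / e in Z j *; rewrite castmx_id cast_ord_id. Qed.

(* Orthonormal rows extend to a unitary matrix, by Gram-Schmidt on the orthogonal complement. *)
Lemma unitarymx_complete k N (X : 'M[C]_(k, N)) : X \is unitarymx ->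
  exists2 Y : 'M[C]_N, Y \is unitarymx &
    forall (i : 'I_k) (j : 'I_N), (j : nat) = i -> row j Y = row i X.
Proof.
move=> XU; set S := schmidt (row_base (X^!)%MS).
have e : (k + \rank (X^!)%MS = N)%N by rewrite -{1}(mxrank_unitary XU) add_rank_ortho.
have SX : (S <= X^!)%MS by rewrite eqmx_schmidt_free ?row_base_free // eq_row_base.
have XSU : col_mx X S \is unitarymx.
  apply/unitarymxP; rewrite tr_col_mx map_row_mx mul_col_row.
  rewrite (unitarymxP XU) (unitarymxP (schmidt_unitarymx _ _)) ?rank_leq_col //.
  rewrite (orthomx1P SX) (orthomx1P _); first exact: esym (scalar_mx_block _ _ 1).
  by rewrite orthomx_sym.
exists (castmx (e, erefl N) (col_mx X S)); first exact: castmx_unitarymx.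
move=> i j ji; rewrite row_castmx.
have -> : cast_ord (esym e) j = lshift _ i by apply: val_inj; rewrite /= ji.
by rewrite rowKu.
Qed.

Section OrthogonalColumns.
Variables (N : nat) (B : 'M[C]_N).
Hypothesis B_orth : forall a b : 'I_N, a != b -> (ctrmx B *m B) a b = 0.
Hypothesis B_sorted :
  forall i j : 'I_N, (i <= j)%N -> vnorm (col j B) <= vnorm (col i B).

Let s i := vnorm (col i B).

(* The nonzero columns of B come first; there are k of them. *)
Let k := find (fun i => s i == 0) (enum 'I_N).

Let k_le : (k <= N)%N.
Proof. by rewrite -[N]size_enum_ord find_size. Qed.

Let s_gt0 (i : 'I_N) : (i < k)%N -> 0 < s i.
Proof.
move=> ik; have := before_find i ik; rewrite nth_ord_enum => si.
by rewrite lt_def si vnorm_ge0.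
Qed.

Let s_eq0 (i : 'I_N) : (k <= i)%N -> s i = 0.
Proof.
move=> ki; have kN : (k < N)%N by apply: leq_ltn_trans ki _.
have := nth_find i (_ : has (fun i => s i == 0) (enum 'I_N)).
rewrite has_find size_enum_ord => /(_ kN).
rewrite -/k -[k]/(nat_of_ord (Ordinal kN)) nth_ord_enum => /eqP sk0.
by apply/eqP; rewrite eq_le vnorm_ge0 andbT -sk0; apply: B_sorted.
Qed.

Let X : 'M[C]_(k, N) :=
  \matrix_(a, l) ((B l (widen_ord k_le a))^* * ((s (widen_ord k_le a))^-1)%:C).

Let X_unitarymx : X \is unitarymx.
Proof.
apply/unitarymxP/matrixP => a b; rewrite -ctrmxE [1%:M a b]mxE.
set a' := widen_ord k_le a; set b' := widen_ord k_le b.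
have -> : (X *m ctrmx X) a b =
    (ctrmx B *m B) a' b' * (((s a')^-1)%:C * ((s b')^-1)%:C).
  rewrite !mxE mulr_suml; apply: eq_bigr => l _; rewrite /ctrmx !mxE.
  rewrite rmorphM /= conjcK -/a' -/b'.
  have -> : forall x : R, (x +i* - 0)%C = x%:C by move=> x; rewrite oppr0.
  ring.
rewrite {}/a' {}/b'; have [<-|ab] := eqVneq a b.
  have sa0 : s (widen_ord k_le a) != 0 := lt0r_neq0 (@s_gt0 (widen_ord k_le a) (ltn_ord a)).
  rewrite -vnorm2_col -sqr_vnorm -/(s _) -!rmorphM /= -(@rmorph1 _ _ (real_complex R)).
  by congr (_ %:C); field.
by rewrite B_orth ?mul0r ?(negPf ab).
Qed.

Lemma orthogonal_cols_factor :
  exists2 U, unitary U & B = U *m diag_mx (\row_i (s i)%:C).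
Proof.
have [Y YU YX] := unitarymx_complete X_unitarymx.
exists (ctrmx Y); first exact: unitarymx_unitary.
apply/matrixP => l i; rewrite mul_mx_diag !mxE.
have [ik|ki] := ltnP i k; last first.
  rewrite s_eq0 // mulr0.
  have : col i B = 0 by apply: vnorm2_eq0; rewrite -sqr_vnorm -/(s i) s_eq0 // expr0n.
  by move/matrixP/(_ l 0); rewrite !mxE.
have := congr1 (fun M : 'rV[C]_N => M 0 l) (YX (Ordinal ik) i erefl).
rewrite /= !mxE => ->.
have -> : widen_ord k_le (Ordinal ik) = i by apply: val_inj.
rewrite rmorphM /= conjcK.
have -> : forall x : R, (x +i* - 0)%C = x%:C by move=> x; rewrite oppr0.
by rewrite -mulrA -rmorphM /= mulVf ?mulr1 // (lt0r_neq0 (s_gt0 ik)).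
Qed.

End OrthogonalColumns.

Lemma unitary_colsub N (W : 'M[C]_N) (sigma : 'I_N -> 'I_N) :
  unitary W -> injective sigma -> unitary (colsub sigma W).
Proof.
move=> W1 sigma_inj; apply/matrixP => a b; rewrite !mxE.
have := congr1 (fun M : 'M[C]_N => M (sigma a) (sigma b)) W1.
rewrite /= !mxE (inj_eq sigma_inj) => <-.
by apply: eq_bigr => l _; rewrite !mxE.
Qed.

(* The spectral theorem for the Hermitian matrix A^* A. *)
Lemma exists_orthogonal_cols N (A : 'M[C]_N) : exists2 V, unitary V &
  forall a b : 'I_N, a != b -> (ctrmx (A *m V) *m (A *m V)) a b = 0.
Proof.
set H := ctrmx A *m A.
have Hn : H \is normalmx by apply/normalmxP; rewrite -ctrmxE /H ctrmxM ctrmxK.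
set P := spectralmx H.
have PU : P \is unitarymx := spectral_unitarymx H.
have HE := orthomx_spectralP Hn; rewrite invmx_unitary // -/P in HE.
have PP : P *m ctrmx P = 1%:M by rewrite ctrmxE; exact/unitarymxP.
exists (ctrmx P); first exact: unitarymx_unitary.
move=> a b ab; rewrite ctrmxM ctrmxK mulmxA -(mulmxA P) -/H {1}HE -ctrmxE.
by rewrite !mulmxA PP mul1mx -mulmxA PP mulmx1 mxE (negPf ab) mulr0n.
Qed.

Lemma exists_sorted_orthogonal_cols N (A : 'M[C]_N) : exists V, [/\ unitary V,
  forall a b : 'I_N, a != b -> (ctrmx (A *m V) *m (A *m V)) a b = 0 &
  forall i j : 'I_N, (i <= j)%N -> vnorm (col j (A *m V)) <= vnorm (col i (A *m V))].
Proof.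
have [V0 V0U V0_orth] := exists_orthogonal_cols A.
have [sigma [sigma_inj sigma_sorted]] :=
  exists_sorting_inj (fun i => vnorm (col i (A *m V0))).
exists (colsub sigma V0); rewrite mulmx_colsub; split.
- exact: unitary_colsub.
- move=> a b ab; rewrite -(V0_orth (sigma a) (sigma b)) ?(inj_eq sigma_inj) // !mxE.
  by apply: eq_bigr => l _; rewrite !mxE.
- by move=> i j ij; rewrite !col_colsub sigma_sorted.
Qed.

Lemma svd_exists N (A : 'M[C]_N) : exists s, svd_values A s.
Proof.
have [V [V1 AV_orth AV_sorted]] := exists_sorted_orthogonal_cols A.
have [U U1 AVE] := orthogonal_cols_factor AV_orth AV_sorted.
exists (fun i => vnorm (col i (A *m V))); split; first by move=> i; exact: vnorm_ge0.
split=> //; exists U, V; split=> //; split=> //.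
by rewrite -AVE -mulmxA (mulmx1C V1) mulmx1.
Qed.

Lemma singular_valuesP N (A : 'M[C]_N) : svd_values A (singular_values A).
Proof. exact: epsilon_spec (svd_exists A). Qed.

Lemma singvalE N (A : 'M[C]_N) (i : 'I_N) : singval A i.+1 = singular_values A i.
Proof. by rewrite /singval /= (nth_map i) ?size_enum_ord // nth_ord_enum. Qed.

End SingularValueDecomposition.

Theorem lemma6 (R : realType) (n m : nat)
  (A Delta : 'I_m.+1 -> 'M[R[i]]_n) (w : 'I_m.+1 -> R) (eps : R)
  (mu1 mu2 : R[i]) (gamma : R) :
  mu1 != mu2 -> 0 < eps ->
  (forall j, 0 <= w j) -> 0 < w ord0 ->
  (forall j, specnorm (Delta j) <= eps * w j) ->
  mp_eigenvalue (fun j => A j + Delta j) mu1 ->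
  mp_eigenvalue (fun j => A j + Delta j) mu2 ->
  gamma != 0 ->
  eps >= specnorm (Fmx Delta mu1 mu2 gamma) / specnorm (Wmx w mu1 mu2 gamma) /\
  specnorm (Fmx Delta mu1 mu2 gamma) / specnorm (Wmx w mu1 mu2 gamma)
    >= singval (Fmx A mu1 mu2 gamma) (2 * n).-1 / specnorm (Wmx w mu1 mu2 gamma).
Proof.
(* mu1 != mu2, 0 < w 0 and gamma != 0 only make the paper's quotients meaningful. *)
move=> _ eps_gt0 w_ge0 _ Dw Q1 Q2 _.
have W_ge0 := specnorm_ge0 (Wmx w mu1 mu2 gamma).
split.
  have [->|W_neq0] := eqVneq (specnorm (Wmx w mu1 mu2 gamma)) 0.
    by rewrite invr0 mulr0 ltW.
  rewrite ler_pdivrMr ?lt_def ?W_neq0 //.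
  exact: specnorm_Fmx_le (ltW eps_gt0) w_ge0 Dw.
apply: ler_wpM2r; first by rewrite invr_ge0.
case: n A Delta Dw Q1 Q2 => [|n] A Delta _ Q1 Q2.
  by rewrite /singval nth_default ?specnorm_ge0 // size_map size_enum_ord.
have [s_ge0 [s_noninc [U [V [U1 [V1 Asvd]]]]]] := singular_valuesP (Fmx A mu1 mu2 gamma).
have i0_lt : (n + n < n.+1 + n.+1)%N by lia.
have i1_lt : ((n + n).+1 < n.+1 + n.+1)%N by lia.
have -> : (2 * n.+1).-1 = (Ordinal i0_lt).+1 by rewrite /=; lia.
rewrite singvalE; apply: (svd_second_smallest_le_specnorm (i1 := Ordinal i1_lt)
  s_ge0 s_noninc U1 V1 Asvd).
  by move=> i; rewrite -val_eqE /= => i_neq; have := ltn_ord i; lia.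
by move=> r; rewrite -Fmx_add; exact: Fmx_ker_orth.
Qed.
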